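(* Every approximant $A\in\mathcal A$ is in normal form with respect to the $\mathsf v$-reduction extended to $\Lambda_\bot$.
   Context: $\Lambda_\bot$ is the set of $\lambda$-terms possibly containing a constant $\bot$: $M::=V\mid MN$, with values $V::=\bot\mid x\mid\lambda x.M$, up to $\alpha$-conversion. Extended rules on $\Lambda_\bot$: $(\beta_v)$ $(\lambda x.M)V\to M\{x:=V\}$ if $V$ is a value (including $\bot$); $(\sigma_1)$ $(\lambda x.M)NP\to(\lambda x.MP)N$ if $x\notin\mathrm{FV}(P)$; $(\sigma_3)$ $V((\lambda x.M)N)\to(\lambda x.VM)N$ if $V$ is a value and $x\notin\mathrm{FV}(V)$; $\mathsf v$-reduction is the contextual closure of their union. Approximants $\mathcal A$ ($k\ge0$): $A::=B\mid C$; $B::=x\mid\lambda x.A\mid\bot\mid xBA_1\cdots A_k$; $C::=(\lambda x.A)(yBA_1\cdots A_k)$. *)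

(* Lambda-terms with a constant bot, up to alpha-conversion,
   represented with de Bruijn indices (so alpha-equivalence is syntactic equality). *)
From Stdlib Require Import Arith.

Inductive term : Type :=
| Bot : term
| Var : nat -> term
| Lam : term -> term
| App : term -> term -> term.

Definition is_value (t : term) : Prop :=
  match t with
  | Bot | Var _ | Lam _ => True
  | App _ _ => False
  end.

Fixpoint lift (k : nat) (t : term) : term :=
  match t with
  | Bot => Bot
  | Var n => if Nat.ltb n k then Var n else Var (S n)
  | Lam m => Lam (lift (S k) m)
  | App m n => App (lift k m) (lift k n)
  end.

Fixpoint subst (k : nat) (u : term) (t : term) : term :=
  match t with
  | Bot => Bot
  | Var n =>
      if Nat.ltb n k then Var n
      else if Nat.eqb n k then u
      else Var (pred n)
  | Lam m => Lam (subst (S k) (lift 0 u) m)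
  | App m n => App (subst k u m) (subst k u n)
  end.

Definition subst0 (u t : term) : term := subst 0 u t.

(* v-reduction: contextual closure of beta_v, sigma_1, sigma_3.
   Side conditions x notin FV(P), x notin FV(V) are realized by lifting
   P (resp. V) when it is moved under the binder. *)
Inductive vstep : term -> term -> Prop :=
| vs_beta : forall M V, is_value V ->
    vstep (App (Lam M) V) (subst0 V M)
| vs_sigma1 : forall M N P,
    vstep (App (App (Lam M) N) P) (App (Lam (App M (lift 0 P))) N)
| vs_sigma3 : forall V M N, is_value V ->
    vstep (App V (App (Lam M) N)) (App (Lam (App (lift 0 V) M)) N)
| vs_lam : forall M M', vstep M M' -> vstep (Lam M) (Lam M')
| vs_appl : forall M M' N, vstep M M' -> vstep (App M N) (App M' N)
| vs_appr : forall M N N', vstep N N' -> vstep (App M N) (App M N').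

(* Approximants:
   A ::= B | C
   B ::= x | \x.A | bot | x B A1 ... Ak   (k >= 0)
   C ::= (\x.A)(y B A1 ... Ak)
   is_H t  <->  t = x B A1 ... Ak for some variable x, B in B, A_i in A. *)
Inductive is_A : term -> Prop :=
| A_B : forall t, is_B t -> is_A t
| A_C : forall t, is_C t -> is_A t
with is_B : term -> Prop :=
| B_var : forall x, is_B (Var x)
| B_lam : forall a, is_A a -> is_B (Lam a)
| B_bot : is_B Bot
| B_head : forall t, is_H t -> is_B t
with is_C : term -> Prop :=
| C_redex : forall a h, is_A a -> is_H h -> is_C (App (Lam a) h)
with is_H : term -> Prop :=
| H_base : forall x b, is_B b -> is_H (App (Var x) b)
| H_app : forall h a, is_H h -> is_A a -> is_H (App h a).

Definition vnormal (t : term) : Prop := forall u, ~ vstep t u.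


(* Every application inside an approximant is either headed by a variable or
   of the form (\x.A) H with H headed by a variable; an application headed by
   a variable is neither a value nor of the shape (\x.M) N.  Hence the
   argument of \x.A never lets beta_v fire, and no subterm has the shape
   required by sigma_1 or sigma_3. *)

Scheme is_A_mut := Induction for is_A Sort Prop
with is_B_mut := Induction for is_B Sort Prop
with is_C_mut := Induction for is_C Sort Prop
with is_H_mut := Induction for is_H Sort Prop.

Lemma vnormal_bot : vnormal Bot.
Proof. intros u S; inversion S. Qed.

Lemma vnormal_var (x : nat) : vnormal (Var x).
Proof. intros u S; inversion S. Qed.

Lemma vnormal_lam (M : term) : vnormal M -> vnormal (Lam M).
Proof. intros HM u S; inversion S; subst; eapply HM; eassumption. Qed.

Lemma vnormal_app (M N : term) :
  vnormal M -> vnormal N ->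
  (forall P, M = Lam P -> ~ is_value N) ->
  (forall P Q, M <> App (Lam P) Q) ->
  (is_value M -> forall P Q, N <> App (Lam P) Q) ->
  vnormal (App M N).
Proof.
  intros HM HN no_beta no_sigma1 no_sigma3 u S; inversion S; subst.
  - eapply no_beta; eauto.
  - eapply no_sigma1; eauto.
  - eapply no_sigma3; eauto.
  - eapply HM; eassumption.
  - eapply HN; eassumption.
Qed.

Lemma H_not_value (h : term) : is_H h -> ~ is_value h.
Proof. intros Hh; destruct Hh; simpl; auto. Qed.

Lemma H_not_lam (h M : term) : is_H h -> h <> Lam M.
Proof. intros Hh; destruct Hh; discriminate. Qed.

Lemma H_not_redex (h M N : term) : is_H h -> h <> App (Lam M) N.
Proof.
  intros Hh E; destruct Hh; injection E as Ef _.
  - discriminate.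
  - eapply H_not_lam; eassumption.
Qed.

Lemma B_not_redex (b M N : term) : is_B b -> b <> App (Lam M) N.
Proof. intros Hb; destruct Hb; try discriminate; apply H_not_redex; assumption. Qed.

Theorem lemma2p3 : forall A : term, is_A A -> vnormal A.
Proof.
  apply (is_A_mut (fun t _ => vnormal t) (fun t _ => vnormal t)
                  (fun t _ => vnormal t) (fun t _ => vnormal t)); auto.
  - exact vnormal_var.
  - intros a _ Na; exact (vnormal_lam a Na).
  - exact vnormal_bot.
  - intros a h _ Na Hh Nh; apply vnormal_app; auto using vnormal_lam.
    + intros P _; exact (H_not_value h Hh).
    + discriminate.
    + intros _ P Q; exact (H_not_redex h P Q Hh).
  - intros x b Hb Nb; apply vnormal_app; auto using vnormal_var; try discriminate.
    intros _ P Q; exact (B_not_redex b P Q Hb).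
  - intros h a Hh Nh _ Na; apply vnormal_app; auto.
    + intros P E; exfalso; exact (H_not_lam h P Hh E).
    + intros P Q; exact (H_not_redex h P Q Hh).
    + intros Vh; contradiction (H_not_value h Hh).
Qed.
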